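(* Let $\mathcal{V}$ be a variety of $\Omega$-algebras with equational base $\Sigma$, and let $\mathcal{W}$ be the variety defined by $\Sigma^p$. Then for any set $X$, the free $\mathcal{W}$-algebra $A=X\mathcal{W}$ is a semilattice sum of $\mathcal{V}$-algebras: $A=\bigsqcup_{s\in S}A_s$, where $S=A/\varrho\cong X\mathcal{S}$ is the free semilattice over $X$ ($\varrho$ the semilattice replica congruence of $A$) and every $\varrho$-class $A_s$ belongs to $\mathcal{V}$. In particular (taking $\Sigma=\mathrm{Id}(\mathcal{V})$), $X\mathcal{V}^p\in\mathcal{V}\circ\mathcal{S}$.
   Context: Standing conventions: $\Omega$-algebras are of a plural similarity type (no nullary operation symbols, at least one operation symbol of arity $\ge2$). $T_n$ is the set of $\Omega$-terms in $x_1,\dots,x_n$ in which all $n$ variables occur. An identity is regular if the same variables occur on both sides. $\mathcal{S}$ is the variety of $\Omega$-algebras satisfying all regular identities; $X\mathcal{S}$ is the free $\mathcal{S}$-algebra over $X$. $\mathcal{V}\circ\mathcal{S}$ is the class of $\Omega$-algebras $A$ having a congruence $\theta$ with $A/\theta\in\mathcal{S}$ and every $\theta$-class (a subalgebra) in $\mathcal{V}$. The semilattice replica congruence of $A$ is the smallest congruence $\varrho$ with $A/\varrho\in\mathcal{S}$. Prolongation: for an identity $\sigma$ of the form $u(y_1,\dots,y_n)=v(y_1,\dots,y_n)$ and $m\ge1$, $\sigma^p_m$ is the set of identities $u(r_1,\dots,r_n)=v(r_1,\dots,r_n)$ obtained by substituting $r_i(x_1,\dots,x_m)$ for $y_i$,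 with $r_i$ ranging over $T_m$; $\sigma^p=\bigcup_m\sigma^p_m$; $\Sigma^p=\bigcup_{\sigma\in\Sigma}\sigma^p$. $\mathcal{V}^p$ is the variety defined by $\mathrm{Id}(\mathcal{V})^p$, where $\mathrm{Id}(\mathcal{V})$ is the set of all identities holding in $\mathcal{V}$. *)

From mathcomp Require Import all_boot.
From Stdlib Require Import ClassicalEpsilon.
Set Implicit Arguments. Unset Strict Implicit. Unset Printing Implicit Defensive.

Record signature := Signature { sym : Type; ar : sym -> nat }.

Definition plural (s : signature) : Prop :=
  (forall f : sym s, 0 < ar f) /\ (exists f : sym s, 1 < ar f).

Section UA.
Variable s : signature.

Inductive term (V : Type) : Type :=
| Var : V -> term V
| Op : forall f : sym s, ('I_(ar f) -> term V) -> term V.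

Definition identity := (term nat * term nat)%type.

Fixpoint occurs (i : nat) (t : term nat) : Prop :=
  match t with
  | Var j => j = i
  | Op f a => exists k, occurs i (a k)
  end.

Definition in_T (m : nat) (t : term nat) : Prop :=
  forall i, occurs i t <-> i < m.

Fixpoint subst (r : nat -> term nat) (t : term nat) : term nat :=
  match t with
  | Var j => r j
  | Op f a => Op (fun k => subst r (a k))
  end.

Definition regular_id (sigma : identity) : Prop :=
  forall i, occurs i sigma.1 <-> occurs i sigma.2.

Definition prolong (Sig : identity -> Prop) : identity -> Prop :=
  fun tau => exists (sigma : identity) (m : nat) (r : nat -> term nat),
    [/\ Sig sigma, 1 <= m, (forall i, in_T m (r i)) &
        tau = (subst r sigma.1, subst r sigma.2)].

Record alg := Alg { carrier :> Type;
                    op : forall f : sym s, ('I_(ar f) -> carrier) -> carrier }.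

Fixpoint eval (A : alg) (a : nat -> A) (t : term nat) : A :=
  match t with
  | Var j => a j
  | Op f ts => op (fun k => eval a (ts k))
  end.

Definition sat (A : alg) (sigma : identity) : Prop :=
  forall a : nat -> A, eval a sigma.1 = eval a sigma.2.

Definition in_var (Sig : identity -> Prop) (A : alg) : Prop :=
  forall sigma, Sig sigma -> sat A sigma.

Definition IdV (Sig : identity -> Prop) : identity -> Prop :=
  fun sigma => forall B : alg, in_var Sig B -> sat B sigma.

Definition hom (A B : alg) (h : A -> B) : Prop :=
  forall f (a : 'I_(ar f) -> A), h (op a) = op (fun k => h (a k)).

Definition is_free (Sig : identity -> Prop) (X : Type) (A : alg) (iota : X -> A)
  : Prop :=
  in_var Sig A /\
  forall (B : alg), in_var Sig B -> forall g : X -> B,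
    (exists h, hom h /\ forall x, h (iota x) = g x) /\
    (forall h1 h2, hom h1 -> hom h2 -> (forall x, h1 (iota x) = g x) ->
        (forall x, h2 (iota x) = g x) -> forall a, h1 a = h2 a).

Definition congruence (A : alg) (th : A -> A -> Prop) : Prop :=
  [/\ (forall x, th x x), (forall x y, th x y -> th y x),
      (forall x y z, th x y -> th y z -> th x z) &
      (forall f (a b : 'I_(ar f) -> A), (forall k, th (a k) (b k)) ->
         th (op a) (op b))].

Section Quot.
Variables (A : alg) (th : A -> A -> Prop).
Definition qcarrier := {C : A -> Prop | exists a, C = th a}.
Definition cls (a : A) : qcarrier := exist _ (th a) (ex_intro _ a erefl).
Definition rep (c : qcarrier) : A :=
  proj1_sig (constructive_indefinite_description _ (proj2_sig c)).
Definition quot_alg : alg :=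
  @Alg qcarrier (fun f cs => cls (op (fun k => rep (cs k)))).
End Quot.

Definition op_closed (A : alg) (P : A -> Prop) : Prop :=
  forall f (a : 'I_(ar f) -> A), (forall k, P (a k)) -> P (op a).

Definition sub_alg (A : alg) (P : A -> Prop) (H : op_closed P) : alg :=
  @Alg {x : A | P x}
     (fun f a => exist _ (op (fun k => proj1_sig (a k)))
                        (H f _ (fun k => proj2_sig (a k)))).

(* The semilattice replica congruence: smallest congruence with A/rho in S. *)
Definition is_replica (A : alg) (rho : A -> A -> Prop) : Prop :=
  [/\ congruence rho, in_var regular_id (quot_alg rho) &
      forall th, congruence th -> in_var regular_id (quot_alg th) ->
        forall x y, rho x y -> th x y].

Definition in_VoS (Sig : identity -> Prop) (A : alg) : Prop :=
  exists th : A -> A -> Prop,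
    [/\ congruence th, in_var regular_id (quot_alg th) &
        forall a : A, exists H : op_closed (th a), in_var Sig (sub_alg H)].

End UA.

From mathcomp Require Import all_boot.
From mathcomp Require Import boolp.
Set Implicit Arguments. Unset Strict Implicit. Unset Printing Implicit Defensive.

(* Every identity of Sigma^p is regular, so every semilattice lies in W; hence
   the replica A/rho of the free W-algebra A = XW is the free semilattice XS.
   Sending an element of A to its content (the set of generators occurring in
   a term for it) is a homomorphism into the power-set semilattice of X, so
   all elements of one rho-class have the same content. After renaming the
   generators of that content to x_0, ..., x_(m-1), finitely many elements of
   a class are values of terms in T_m at the same generators; thus each
   identity of Sigma, evaluated inside a class, is an instance of an identity
   of Sigma^p_m, which holds in A. *)

Lemma proj1_sig_inj (T : Type) (P : T -> Prop) (x y : {z | P z}) :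
  proj1_sig x = proj1_sig y -> x = y.
Proof. exact: eq_sig_hprop (fun z => @Prop_irrelevance (P z)) x y. Qed.

Section Terms.
Variable s : signature.
Implicit Types (t : term s nat).

Fixpoint vars t : seq nat :=
  match t with
  | Var j => [:: j]
  | Op f a => flatten [seq vars (a k) | k <- enum 'I_(ar f)]
  end.

Lemma mem_vars j t : j \in vars t <-> occurs j t.
Proof.
elim: t => [v|f a IH] /=; first by rewrite inE; split => [/eqP ->|->].
split.
- by move=> /flattenP [l /mapP [k _ ->]] /IH; exists k.
- move=> [k /IH jak]; apply/flattenP; exists (vars (a k)) => //.
  by apply/mapP; exists k; rewrite ?mem_enum.
Qed.

Lemma occurs_bounded t : exists N, forall j, occurs j t -> j <= N.
Proof.
exists (\max_(j <- vars t) j) => j /mem_vars jt.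
exact: (@leq_bigmax_seq _ (vars t) xpredT id j jt).
Qed.

Lemma occurs_exists (nonnullary : forall f : sym s, 0 < ar f) t :
  exists j, occurs j t.
Proof.
elim: t => [v|f ts IH] /=; first by exists v.
have [j jt] := IH (Ordinal (nonnullary f)); by exists j, (Ordinal (nonnullary f)).
Qed.

Lemma occurs_subst i r t :
  occurs i (subst r t) <-> exists j, occurs j t /\ occurs i (r j).
Proof.
elim: t => [v|f ts IH] /=.
- by split => [ir|[j [-> ir]]]; first exists v.
- split.
  + by move=> [k /IH [j [jt ir]]]; exists j; split => //; exists k.
  + by move=> [j [[k jt] ir]]; exists k; apply/IH; exists j.
Qed.

Lemma eval_ext (A : alg s) (a b : nat -> A) t :
  (forall j, occurs j t -> a j = b j) -> eval a t = eval b t.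
Proof.
elim: t => [v|f ts IH] /= eq_ab; first exact: eq_ab.
by congr op; apply: funext => k; apply: IH => j jt; apply: eq_ab; exists k.
Qed.

Lemma eval_subst (A : alg s) (a : nat -> A) r t :
  eval a (subst r t) = eval (fun j => eval a (r j)) t.
Proof. by elim: t => [v|f ts IH] //=; congr op; apply: funext. Qed.

Definition vcontent (X : Type) (e : nat -> X) t : X -> Prop :=
  fun y => exists j, occurs j t /\ e j = y.

(* The variables of terms with a common e-content are renamed injectively along
   that content, indexed by position in a duplicate-free list of it. *)
Lemma compress_vars (nonnullary : forall f : sym s, 0 < ar f) (X : Type) N
    (i0 : 'I_N) (e : nat -> X) (ts : 'I_N -> term s nat) :
  (forall i, vcontent e (ts i) = vcontent e (ts i0)) ->
  exists m (e' : nat -> X) (rs : 'I_N -> term s nat), 1 <= m /\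
    forall i, in_T m (rs i) /\
      forall (B : alg s) (g : X -> B), eval (g \o e') (rs i) = eval (g \o e) (ts i).
Proof.
move=> same_content.
pose ec : nat -> {classic X} := e.
pose L := undup [seq ec j | j <- vars (ts i0)].
have memL i j : occurs j (ts i) -> ec j \in L.
  move=> jt; have : vcontent e (ts i0) (e j) by rewrite -(same_content i); exists j.
  by move=> [j' [/mem_vars j't ej']]; rewrite mem_undup /ec -ej'; apply: map_f.
exists (size L), (nth (ec 0) L), (fun i => subst (fun j => Var s (index (ec j) L)) (ts i)).
split.
  by have [j /memL] := occurs_exists nonnullary (ts i0); case: (L).
move=> i; split.
- move=> k; rewrite occurs_subst; split.
  + by move=> [j [jt /= <-]]; rewrite index_mem; apply: memL jt.
  + move=> kL; have := mem_nth (ec 0) kL; rewrite mem_undup => /mapP [j' /mem_vars j't ej'].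
    have : vcontent e (ts i) (e j') by rewrite same_content; exists j'.
    move=> [j [jt ej]]; exists j; split => //=.
    by rewrite /ec ej -/(ec j') -ej' index_uniq ?undup_uniq.
- move=> B g; rewrite eval_subst; apply: eval_ext => j jt /=.
  by rewrite nth_index //; apply: memL jt.
Qed.

End Terms.

Section Quotients.
Variables (s : signature) (A : alg s) (th : A -> A -> Prop).
Hypothesis th_cong : congruence th.

Lemma clsK (c : qcarrier th) : cls th (rep c) = c.
Proof.
apply: proj1_sig_inj; rewrite /rep.
by case: (ClassicalEpsilon.constructive_indefinite_description _ _) => a /= ->.
Qed.

Lemma eq_cls a b : cls th a = cls th b <-> th a b.
Proof.
case: th_cong => refl sym trans _; split.
- by move=> /(congr1 (@proj1_sig _ _)) /= ->; apply: refl.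
- move=> ab; apply: proj1_sig_inj; apply: funext => x /=.
  by apply: propext; split => [ax|bx]; [apply: trans (sym _ _ ab) ax | apply: trans ab bx].
Qed.

Lemma rep_cls a : th (rep (cls th a)) a.
Proof. by apply/eq_cls; rewrite clsK. Qed.

Lemma eval_cong (a b : nat -> A) t :
  (forall j, th (a j) (b j)) -> th (eval a t) (eval b t).
Proof. by case: th_cong => _ _ _ compat ab; elim: t => [v|f ts IH] //=; apply: compat. Qed.

Lemma eval_quot (b : nat -> quot_alg th) t :
  eval b t = cls th (eval (fun j => rep (b j)) t).
Proof.
elim: t => [v|f ts IH] /=; first by rewrite clsK.
apply/eq_cls; case: th_cong => _ _ _ compat.
by apply: compat => k; rewrite IH; apply: rep_cls.
Qed.

Lemma cls_hom : @hom s A (quot_alg th) (cls th).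
Proof.
move=> f a /=; apply/eq_cls; case: th_cong => _ sym _ compat.
by apply: compat => k; apply: sym; apply: rep_cls.
Qed.

Lemma quot_regularP :
  in_var (@regular_id s) (quot_alg th) <->
  forall sigma, regular_id sigma -> forall b : nat -> A,
    th (eval b sigma.1) (eval b sigma.2).
Proof.
split => [S_quot sigma reg b | regular_th sigma reg b]; last first.
  by rewrite !eval_quot; apply/eq_cls; apply: regular_th.
have := S_quot sigma reg (fun j => cls th (b j)); rewrite !eval_quot => /eq_cls.
have rep_b j : th (rep (cls th (b j))) (b j) by apply: rep_cls.
case: th_cong => _ sym trans _ E.
by apply: trans (trans _ _ _ (sym _ _ (eval_cong sigma.1 rep_b)) E) (eval_cong _ rep_b).
Qed.

End Quotients.

Section Homomorphisms.
Variables (s : signature) (A B : alg s) (k : A -> B).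
Hypothesis k_hom : hom k.

Lemma hom_eval (a : nat -> A) t : k (eval a t) = eval (fun j => k (a j)) t.
Proof. by elim: t => [v|f ts IH] //=; rewrite k_hom; congr op; apply: funext. Qed.

Lemma kernel_congruence : congruence (fun x y => k x = k y).
Proof.
split=> [x|x y ->|x y z -> ->|f a b ab] //.
by rewrite !k_hom; congr op; apply: funext.
Qed.

Lemma kernel_regular : in_var (@regular_id s) B ->
  in_var (@regular_id s) (quot_alg (fun x y => k x = k y)).
Proof.
move=> B_S; apply/(quot_regularP kernel_congruence) => sigma reg b.
by rewrite !hom_eval; apply: B_S.
Qed.

End Homomorphisms.

Lemma sub_eval (s : signature) (A : alg s) (P : A -> Prop) (H : op_closed P)
    (a : nat -> sub_alg H) t :
  proj1_sig (eval a t) = eval (fun j => proj1_sig (a j)) t.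
Proof. by elim: t => [v|f ts IH] //=; congr op; apply: funext. Qed.

Lemma sub_alg_in_var (s : signature) (Sig : identity s -> Prop) (A : alg s)
    (P : A -> Prop) (H : op_closed P) :
  in_var Sig A -> in_var Sig (sub_alg H).
Proof.
by move=> A_V sigma Sig_sigma a; apply: proj1_sig_inj; rewrite !sub_eval; apply: A_V.
Qed.

Lemma in_var_IdV (s : signature) (Sig : identity s -> Prop) (B : alg s) :
  in_var (IdV Sig) B -> in_var Sig B.
Proof. by move=> B_V sigma Sig_sigma; apply: B_V => C; apply. Qed.

Section Semilattices.
Variable s : signature.
Hypothesis nonnullary : forall f : sym s, 0 < ar f.

Lemma prolong_regular (Sig : identity s -> Prop) tau :
  prolong Sig tau -> regular_id tau.
Proof.
move=> [sigma [m [r [_ _ rT ->]]]] i /=.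
suff occurs_i t : occurs i (subst r t) <-> i < m by rewrite !occurs_i.
rewrite occurs_subst; split => [[j [_ /(rT j i)]] //|im].
by have [j jt] := occurs_exists nonnullary t; exists j; split => //; apply/(rT j i).
Qed.

Lemma regular_in_prolong (Sig : identity s -> Prop) (B : alg s) :
  in_var (@regular_id s) B -> in_var (prolong Sig) B.
Proof. by move=> B_S tau /prolong_regular; apply: B_S. Qed.

Definition powerset_alg (X : Type) : alg s :=
  @Alg s (X -> Prop) (fun f a x => exists k, a k x).

Lemma eval_powerset (X : Type) (b : nat -> powerset_alg X) t :
  eval b t = fun x => exists j, occurs j t /\ b j x.
Proof.
elim: t => [v|f ts IH] /=; apply: funext => x; apply: propext.
- by split => [bx|[j [-> bx]]]; first exists v.
- split.
  + by move=> [k]; rewrite IH => -[j [jt bx]]; exists j; split => //; exists k.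
  + by move=> [j [[k jt] bx]]; exists k; rewrite IH; exists j.
Qed.

Lemma powerset_regular (X : Type) : in_var (@regular_id s) (powerset_alg X).
Proof.
move=> sigma reg b; rewrite !eval_powerset; apply: funext => x; apply: propext.
by split=> -[j [jt bx]]; exists j; split => //; apply/reg.
Qed.

End Semilattices.

Section Generation.
Variables (s : signature) (X : Type) (A : alg s) (iota : X -> A).

Definition generated (a : A) := exists (e : nat -> X) t, a = eval (iota \o e) t.

(* Variable j of the k-th term is renamed to j * N + k. *)
Lemma common_valuation N (N_gt0 : 0 < N) (F : 'I_N -> A) :
  (forall k, generated (F k)) ->
  exists (e : nat -> X) (ts : 'I_N -> term s nat),
    forall k, F k = eval (iota \o e) (ts k).
Proof.
move=> F_gen; have [ET ET_F] := choice (fun k => F_gen k).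
have [T T_F] := choice (fun k => ET_F k).
exists (fun n => ET (Ordinal (ltn_pmod n N_gt0)) (n %/ N)).
exists (fun k : 'I_N => subst (fun j => Var s (j * N + k)) (T k)).
move=> k; rewrite T_F eval_subst; apply: eval_ext => j _ /=.
have -> : Ordinal (ltn_pmod (j * N + k) N_gt0) = k.
  by apply: val_inj; rewrite /= modnMDl modn_small.
by rewrite divnMDl // divn_small // addn0.
Qed.

Lemma generated_op_closed : (forall f : sym s, 0 < ar f) -> op_closed generated.
Proof.
move=> nonnullary f a a_gen; have [e [ts ts_a]] := common_valuation (nonnullary f) a_gen.
by exists e, (Op ts) => /=; congr op; apply: funext.
Qed.

(* The subalgebra of generated elements contains iota, so by uniqueness of
   extensions its inclusion composed with the extension of iota is the identity. *)
Lemma free_generated (Sig : identity s -> Prop) :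
  (forall f : sym s, 0 < ar f) -> is_free Sig iota -> forall a, generated a.
Proof.
move=> nonnullary [A_V A_univ] a.
have iota_gen x : generated (iota x) by exists (fun _ => x), (Var s 0).
have gen_V := sub_alg_in_var (H := generated_op_closed nonnullary) A_V.
have [[g [g_hom g_iota]] _] := A_univ _ gen_V (fun x => exist _ (iota x) (iota_gen x)).
have [_ A_uniq] := A_univ _ A_V iota.
suff <- : proj1_sig (g a) = a by apply: proj2_sig.
apply: (A_uniq (fun y => proj1_sig (g y)) id) => // [f b|x] /=; first by rewrite g_hom.
by rewrite g_iota.
Qed.

End Generation.

Lemma replica_exists (s : signature) (A : alg s) :
  exists rho : A -> A -> Prop, is_replica rho.
Proof.
pose rho x y := forall th : A -> A -> Prop, congruence th ->
  in_var (@regular_id s) (quot_alg th) -> th x y.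
have rho_cong : congruence rho.
  split=> [x th [refl _ _ _] //|x y xy th th_cong th_S|x y z xy yz th th_cong th_S|].
  - by case: (th_cong) => _ sym _ _; apply: sym; apply: xy.
  - by case: (th_cong) => _ _ trans _; apply: trans (xy _ _ th_S) (yz _ _ th_S).
  move=> f a b ab th th_cong th_S; case: (th_cong) => _ _ _ compat.
  by apply: compat => k; apply: ab.
exists rho; split => // [|th th_cong th_S x y]; last exact.
apply/(quot_regularP rho_cong) => sigma reg b th th_cong th_S.
exact: (proj1 (quot_regularP th_cong) th_S).
Qed.

Section FreeProlongedAlgebra.
Variable s : signature.
Hypothesis nonnullary : forall f : sym s, 0 < ar f.
Variables (Sig : identity s -> Prop) (X : Type) (A : alg s) (iota : X -> A).
Hypothesis A_free : is_free (prolong Sig) iota.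
Variable rho : A -> A -> Prop.
Hypothesis rho_replica : is_replica rho.

Lemma replica_kernel (B : alg s) (k : A -> B) :
  hom k -> in_var (@regular_id s) B -> forall x y, rho x y -> k x = k y.
Proof.
move=> k_hom B_S; case: rho_replica => _ _ rho_min.
exact: rho_min (kernel_congruence k_hom) (kernel_regular k_hom B_S).
Qed.

Lemma quot_replica_free :
  @is_free s (@regular_id s) X (quot_alg rho) (fun x => cls rho (iota x)).
Proof.
case: rho_replica => rho_cong rho_S _; case: A_free => _ A_univ.
split => // B B_S g.
have [[k [k_hom k_iota]] k_uniq] := A_univ B (regular_in_prolong nonnullary B_S) g.
have k_rep a : k (rep (cls rho a)) = k a.
  exact: replica_kernel k_hom B_S _ _ (rep_cls rho_cong a).
split.
- exists (fun c => k (rep c)); split => [f cs|x] /=; last by rewrite k_rep.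
  by rewrite k_rep k_hom.
- move=> h1 h2 h1_hom h2_hom h1_iota h2_iota c; rewrite -(clsK c).
  by apply: (k_uniq (h1 \o cls rho) (h2 \o cls rho)) => // f a /=;
    rewrite (cls_hom rho_cong) ?h1_hom ?h2_hom.
Qed.

Lemma content_hom : exists c : A -> powerset_alg s X,
  hom c /\ forall e t, c (eval (iota \o e) t) = vcontent e t.
Proof.
case: A_free => _ A_univ.
have [[c [c_hom c_iota]] _] :=
  A_univ _ (regular_in_prolong nonnullary (powerset_regular (X := X))) (fun x y => x = y).
exists c; split => // e t; rewrite hom_eval //.
have -> : (fun j => c ((iota \o e) j)) = (fun j y => e j = y).
  by apply: funext => j; apply: c_iota.
by rewrite eval_powerset.
Qed.

Lemma rho_class_representation a0 N (b : 'I_N.+1 -> A) :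
  (forall i, rho a0 (b i)) ->
  exists m (e : nat -> X) (rs : 'I_N.+1 -> term s nat), 1 <= m /\
    forall i, in_T m (rs i) /\ b i = eval (iota \o e) (rs i).
Proof.
move=> b_rho.
have [e [ts b_ts]] :=
  common_valuation (ltn0Sn N) (fun i => free_generated nonnullary A_free (b i)).
have [c [c_hom c_eval]] := content_hom.
have same_content i : vcontent e (ts i) = vcontent e (ts ord0).
  rewrite -!c_eval -!b_ts.
  have c_rho := replica_kernel c_hom (powerset_regular (X := X)).
  by rewrite -(c_rho _ _ (b_rho i)) (c_rho _ _ (b_rho ord0)).
have [m [e' [rs [m_gt0 rs_T]]]] := compress_vars nonnullary same_content.
exists m, e', rs; split => // i; have [rs_i_T rs_eval] := rs_T i.
by split; last rewrite rs_eval -b_ts.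
Qed.

Lemma rho_class_op_closed a0 : op_closed (rho a0).
Proof.
case: (rho_replica) => rho_cong rho_S _; case: (rho_cong) => _ sym trans compat.
move=> f a a_rho; pose idem : identity s := (Op (fun _ : 'I_(ar f) => Var s 0), Var s 0).
have idem_regular : regular_id idem.
  by move=> i /=; split=> [[]|<-] //; exists (Ordinal (nonnullary f)).
have := proj1 (quot_regularP rho_cong) rho_S idem idem_regular (fun _ => a0).
by move=> /= /sym idem_a0; apply: trans idem_a0 _; apply: compat.
Qed.

Lemma rho_class_sat a0 sigma : Sig sigma ->
  forall b : nat -> A, (forall j, rho a0 (b j)) -> eval b sigma.1 = eval b sigma.2.
Proof.
move=> Sig_sigma b b_rho.
have [N1 bound1] := occurs_bounded sigma.1; have [N2 bound2] := occurs_bounded sigma.2.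
pose N := maxn N1 N2.
have [m [e [rs [m_gt0 rs_T]]]] :=
  rho_class_representation (b := fun i : 'I_N.+1 => b i) (fun i => b_rho i).
pose r j := rs (inord j).
have prolonged : prolong Sig (subst r sigma.1, subst r sigma.2).
  by exists sigma, m, r; split => // j; have [] := rs_T (inord j).
have eval_r t : (forall j, occurs j t -> j <= N) ->
    eval (fun j => eval (iota \o e) (r j)) t = eval b t.
  move=> t_bound; apply: eval_ext => j jt; rewrite -(proj2 (rs_T _)) /=.
  by rewrite inordK // ltnS t_bound.
have := A_free.1 _ prolonged (iota \o e); rewrite /= !eval_subst !eval_r //.
- by move=> j /bound2 jN2; rewrite leq_max jN2 orbT.
- by move=> j /bound1 jN1; rewrite leq_max jN1.
Qed.

Lemma rho_class_in_var a0 : exists H : op_closed (rho a0), in_var Sig (sub_alg H).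
Proof.
exists (@rho_class_op_closed a0) => sigma Sig_sigma a; apply: proj1_sig_inj.
by rewrite !sub_eval; apply: rho_class_sat => // j; apply: proj2_sig.
Qed.

End FreeProlongedAlgebra.

Theorem proposition3p2 (s : signature) (Hpl : plural s)
  (Sig : identity s -> Prop) (X : Type) (A : alg s) (iota : X -> A) :
  is_free (prolong Sig) iota ->
  [/\ (exists rho : A -> A -> Prop, is_replica rho),
      (forall rho : A -> A -> Prop, is_replica rho ->
         @is_free s (@regular_id s) X (quot_alg rho) (fun x => cls rho (iota x)) /\
         (forall a : A, exists H : op_closed (rho a), in_var Sig (sub_alg H))) &
      (forall (B : alg s) (kappa : X -> B),
         is_free (prolong (IdV Sig)) kappa -> in_VoS Sig B)].
Proof.
move=> A_free; have [nonnullary _] := Hpl; split.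
- exact: replica_exists.
- move=> rho rho_replica; split.
  + exact (quot_replica_free nonnullary A_free rho_replica).
  + move=> a; exact (rho_class_in_var nonnullary A_free rho_replica a).
- move=> B kappa B_free; have [rho rho_replica] := replica_exists B.
  have [rho_cong rho_S _] := rho_replica; exists rho; split => // b.
  have [H H_V] := rho_class_in_var nonnullary B_free rho_replica b.
  by exists H; apply: in_var_IdV.
Qed.
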